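(* Let $G$ be a closed subgroup of $S_\infty$. Then there is a good quantifier $Q_G$ of type $\langle 2\rangle$ on $\mathbb{N}$ with $\mathrm{Aut}(Q_G)=G$.
   Context: $S_\infty$ is the group of permutations of $\mathbb{N}$ with the topology of pointwise convergence. A quantifier of type $\langle k\rangle$ on $\mathbb{N}$ is a set $Q\subseteq 2^{\mathbb{N}^k}$ (a family of subsets of $\mathbb{N}^k$; $2^{\mathbb{N}^k}$ carries the product topology). $Q$ is downwards closed if it is closed under subsets. For a map $p$ and $A\subseteq\mathbb{N}^k$, $p(A)=\{(p(a_1),\dots,p(a_k)):(a_1,\dots,a_k)\in A\}$. For $Q$ closed and downwards closed, a function $p:n\to\mathbb{N}$ is compatible with $Q$ if for every $A\subseteq n^k$, $A\in Q\iff p(A)\in Q$. A permutation $f$ of $\mathbb{N}$ fixes $Q$ if $A\in Q\iff f(A)\in Q$ for all $A\subseteq\mathbb{N}^k$; $\mathrm{Aut}(Q)$ is the group of such permutations. $Q$ is good if it is closed, downwards closed, and every finite injection $p:n\to\mathbb{N}$ compatible with $Q$ extends to a permutation of $\mathbb{N}$ fixing $Q$. *)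

From Stdlib Require Import Arith.

Definition is_perm (f : nat -> nat) : Prop :=
  exists g : nat -> nat, (forall x, g (f x) = x) /\ (forall x, f (g x) = x).

Definition is_subgroup (G : (nat -> nat) -> Prop) : Prop :=
  (forall f, G f -> is_perm f) /\
  G (fun x => x) /\
  (forall f g, G f -> G g -> G (fun x => f (g x))) /\
  (forall f g, G f -> (forall x, g (f x) = x) -> (forall x, f (g x) = x) -> G g).

(* G is closed in S_infinity for the topology of pointwise convergence:
   basic neighbourhoods of f are {g | g agrees with f on {0,...,n-1}}. *)
Definition is_closed_in_Sinf (G : (nat -> nat) -> Prop) : Prop :=
  forall f, is_perm f ->
    (forall n, exists g, G g /\ forall i, i < n -> g i = f i) -> G f.

Definition rel2 := nat * nat -> Prop.
Definition quant2 := rel2 -> Prop.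

(* Q closed in 2^(N^2) (product topology): basic neighbourhoods of A are
   {B | B agrees with A on {0..n-1}^2}. *)
Definition q_closed (Q : quant2) : Prop :=
  forall A : rel2,
    (forall n, exists B, Q B /\
        forall a b, a < n -> b < n -> (B (a, b) <-> A (a, b))) -> Q A.

Definition q_down_closed (Q : quant2) : Prop :=
  forall A B : rel2, Q A -> (forall z, B z -> A z) -> Q B.

Definition img2 (p : nat -> nat) (A : rel2) : rel2 :=
  fun z => exists a, A a /\ z = (p (fst a), p (snd a)).

(* p : n -> N (only values below n matter) is compatible with Q. *)
Definition compatible (Q : quant2) (n : nat) (p : nat -> nat) : Prop :=
  forall A : rel2, (forall a b, A (a, b) -> a < n /\ b < n) ->
    (Q A <-> Q (img2 p A)).

Definition fixes (Q : quant2) (f : nat -> nat) : Prop :=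
  forall A : rel2, Q A <-> Q (img2 f A).

Definition in_Aut (Q : quant2) (f : nat -> nat) : Prop := is_perm f /\ fixes Q f.

Definition inj_below (n : nat) (p : nat -> nat) : Prop :=
  forall i j, i < n -> j < n -> p i = p j -> i = j.

Definition good (Q : quant2) : Prop :=
  q_closed Q /\ q_down_closed Q /\
  forall n p, inj_below n p -> compatible Q n p ->
    exists f, in_Aut Q f /\ forall i, i < n -> f i = p i.

(* Code every g in G by its path: the relation with the loop (g 0, g 0) and
   the edges (g i, g (i+1)).  A set A lies in Q_G when each finite square
   of A is contained in the path of some g in G.  Since g is injective, the
   path of g is a path without branching that starts at its only loop, so a
   path that follows it from the loop must be an initial segment of g.
   Hence a compatible finite injection p sends the initial segment of the
   identity's path into some path of G and so agrees with some g in G; the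
   same argument applied to an automorphism f gives elements of G agreeing
   with f on every initial segment, and closedness of G puts f in G. *)

From Stdlib Require Import Arith Lia.

Definition path_rel (g : nat -> nat) : rel2 :=
  fun z => z = (g 0, g 0) \/ exists i, z = (g i, g (S i)).

Definition path_prefix (k : nat) : rel2 :=
  fun z => z = (0, 0) \/ exists i, i < k /\ z = (i, S i).

Definition path_quant (G : (nat -> nat) -> Prop) : quant2 :=
  fun A => forall m, exists g, G g /\
    forall a b, a < m -> b < m -> A (a, b) -> path_rel g (a, b).

Lemma is_perm_inj (f : nat -> nat) :
  is_perm f -> forall x y, f x = f y -> x = y.
Proof.
  intros [h [hf _]] x y E.
  rewrite <- (hf x), <- (hf y), E. reflexivity.
Qed.

Lemma exists_bound_below (p : nat -> nat) (n : nat) :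
  exists m, forall i, i <= n -> p i < m.
Proof.
  induction n as [|n [m Hm]].
  - exists (S (p 0)). intros i Hi. replace i with 0 by lia. lia.
  - exists (S (m + p (S n))). intros i Hi.
    destruct (Nat.eq_dec i (S n)) as [-> | Hne]; [lia|].
    specialize (Hm i ltac:(lia)). lia.
Qed.

Lemma path_rel_img (h g : nat -> nat) (a b : nat) :
  path_rel g (a, b) -> path_rel (fun x => h (g x)) (h a, h b).
Proof.
  intros [E | [i E]]; injection E as -> ->; [left | right; exists i]; reflexivity.
Qed.

Lemma path_prefix_sub_path_id (k : nat) (z : nat * nat) :
  path_prefix k z -> path_rel (fun x => x) z.
Proof. intros [E | [i [_ E]]]; [left | right; exists i]; exact E. Qed.

Lemma img2_cancel_sub (f g : nat -> nat) (A : rel2) :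
  (forall x, g (f x) = x) -> forall z, A z -> img2 g (img2 f A) z.
Proof.
  intros gf [a b] Hab. exists (f a, f b). split.
  - exists (a, b). auto.
  - simpl. rewrite !gf. reflexivity.
Qed.

Lemma path_rel_rigid (g p : nat -> nat) (n : nat) :
  (forall x y, g x = g y -> x = y) ->
  path_rel g (p 0, p 0) ->
  (forall i, i < n -> p i <> p (S i) /\ path_rel g (p i, p (S i))) ->
  forall i, i <= n -> p i = g i.
Proof.
  intros Ig H0 Hstep. induction i as [|i IH]; intros Hi.
  - destruct H0 as [E | [j E]]; injection E as E1 E2; [exact E1|].
    (* the only loop of the path of g sits at g 0 *)
    assert (j = S j) by (apply Ig; congruence). lia.
  - destruct (Hstep i ltac:(lia)) as [Hne [E | [j E]]]; injection E as E1 E2.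
    + exfalso. apply Hne. rewrite IH by lia. congruence.
    + rewrite IH in E1 by lia. apply Ig in E1. subst j. exact E2.
Qed.

Section PathQuantifier.

Variable G : (nat -> nat) -> Prop.
Hypothesis G_subgroup : is_subgroup G.

Lemma path_quant_closed : q_closed (path_quant G).
Proof.
  intros A HA m. destruct (HA m) as [B [HB Hagree]].
  destruct (HB m) as [g [Gg Hg]].
  exists g. split; [exact Gg|].
  intros a b Ha Hb HAab. apply Hg; auto. apply Hagree; auto.
Qed.

Lemma path_quant_down_closed : q_down_closed (path_quant G).
Proof.
  intros A B HA HBA m. destruct (HA m) as [g [Gg Hg]].
  exists g. split; auto.
Qed.

Lemma path_quant_prefix (k : nat) : path_quant G (path_prefix k).
Proof.
  intros m. exists (fun x => x). split.
  - apply G_subgroup.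
  - intros a b _ _. apply path_prefix_sub_path_id.
Qed.

Lemma path_quant_img (h : nat -> nat) (A : rel2) :
  G h -> path_quant G A -> path_quant G (img2 h A).
Proof.
  destruct G_subgroup as [Gperm [_ [Gcomp _]]].
  intros Gh HA m.
  destruct (Gperm h Gh) as [hi [hih _]].
  destruct (exists_bound_below hi m) as [m' Hm'].
  destruct (HA m') as [g [Gg Hg]].
  exists (fun x => h (g x)). split; [apply Gcomp; assumption|].
  intros a b Ha Hb [[a' b'] [HAab E]]. injection E as -> ->.
  apply path_rel_img, Hg; [| |exact HAab].
  - rewrite <- (hih a'). apply Hm'. lia.
  - rewrite <- (hih b'). apply Hm'. lia.
Qed.

Lemma path_quant_prefix_agree (p : nat -> nat) (k : nat) :
  path_quant G (img2 p (path_prefix k)) ->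
  (forall i, i < k -> p i <> p (S i)) ->
  exists g, G g /\ forall i, i <= k -> g i = p i.
Proof.
  intros Hp Hne.
  destruct (exists_bound_below p k) as [m Hm].
  destruct (Hp m) as [g [Gg Hg]].
  exists g. split; [exact Gg|].
  assert (Ig : forall x y, g x = g y -> x = y).
  { apply is_perm_inj, (proj1 G_subgroup), Gg. }
  intros i Hi. symmetry. apply (path_rel_rigid g p k Ig); [| |exact Hi].
  - apply Hg; try (apply Hm; lia). exists (0, 0). split; [left|]; reflexivity.
  - intros j Hj. split; [apply Hne, Hj|].
    apply Hg; try (apply Hm; lia).
    exists (j, S j). split; [right; exists j|]; auto.
Qed.

Lemma in_Aut_path_quant (f : nat -> nat) : G f -> in_Aut (path_quant G) f.
Proof.
  destruct G_subgroup as [Gperm [_ [_ Ginv]]].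
  intros Gf. split; [apply Gperm, Gf|].
  destruct (Gperm f Gf) as [fi [fif ffi]].
  intros A. split; [apply path_quant_img, Gf|].
  intros HA. apply (path_quant_img fi) in HA; [|exact (Ginv f fi Gf fif ffi)].
  apply (path_quant_down_closed _ _ HA), img2_cancel_sub, fif.
Qed.

Hypothesis G_closed : is_closed_in_Sinf G.

Lemma in_Aut_path_quantP (f : nat -> nat) : in_Aut (path_quant G) f <-> G f.
Proof.
  split; [|apply in_Aut_path_quant].
  intros [Pf Ff]. apply G_closed; [exact Pf|]. intros n.
  destruct (path_quant_prefix_agree f n) as [g [Gg Hg]].
  - apply (proj1 (Ff _)), path_quant_prefix.
  - intros i _ E. apply is_perm_inj in E; [lia | exact Pf].
  - exists g. split; [exact Gg|]. intros i Hi. apply Hg. lia.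
Qed.

Lemma path_quant_extends (n : nat) (p : nat -> nat) :
  inj_below n p -> compatible (path_quant G) n p ->
  exists f, in_Aut (path_quant G) f /\ forall i, i < n -> f i = p i.
Proof.
  intros Hinj Hcomp. destruct n as [|k].
  - exists (fun x => x). split; [|intros; lia].
    apply in_Aut_path_quant, G_subgroup.
  - assert (Hp : path_quant G (img2 p (path_prefix k))).
    { assert (Hdom : forall a b, path_prefix k (a, b) -> a < S k /\ b < S k).
      { intros a b [E | [i [Hi E]]]; injection E as -> ->; lia. }
      apply (proj1 (Hcomp _ Hdom)), path_quant_prefix. }
    destruct (path_quant_prefix_agree p k Hp) as [g [Gg Hg]].
    + intros i Hi E. apply Hinj in E; lia.
    + exists g. split; [apply in_Aut_path_quant, Gg|].
      intros i Hi. apply Hg. lia.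
Qed.

End PathQuantifier.

Theorem proposition13 (G : (nat -> nat) -> Prop) :
  is_subgroup G -> is_closed_in_Sinf G ->
  exists Q : quant2, good Q /\ (forall f, in_Aut Q f <-> G f).
Proof.
  intros HG Hcl. exists (path_quant G). split.
  - split; [apply path_quant_closed|].
    split; [apply path_quant_down_closed|].
    apply path_quant_extends, HG.
  - apply in_Aut_path_quantP; assumption.
Qed.
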